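(* Let $(K,\mathrm{val})$ be a valued field whose residue class field $F$ has characteristic two, and assume every strict unit admits a square root in $K$. Let $A$ be a subring with $B\subseteq A\subseteq K$ and let $\mathcal M$ be a nonzero proper quasi-quadratic module of $A$. Then $S=\mathrm{val}(\mathcal M\setminus\{0\})$ is a well-behaved subset of $\mathrm{val}(A\setminus\{0\})$, and exactly one of the following holds: (1) $S$ has no smallest element, and $\mathcal M=\Gamma_1(S)$; (2) $A=B$, $S$ has a smallest element $g_{\min}$, and $\mathcal M=\Gamma_2(S,M_{g_{\min}}(\mathcal M))$.
   Context: Let $(G,\le)$ be a totally ordered abelian group written multiplicatively with identity $e$, $G^2=\{g^2:g\in G\}$. Let $(K,\mathrm{val})$ be a valued field with surjective valuation $\mathrm{val}:K\to G\cup\{\infty\}$, valuation ring $B=\{x:\mathrm{val}(x)\ge e\}$, residue map $\pi:B\to F$, residue field $F$. A strict unit is $x\in B^\times$ with $\pi(x)=1$. For $g\in G$, $\overline g$ denotes its class in $G/G^2$. A quasi-quadratic module in a commutative ring $R$ is a subset $M$ with $M+M\subseteq M$ and $a^2M\subseteq M$ for all $a\in R$. A pseudo-angular component map is a map $\mathrm{p.an}:K^\times\to F^\times$ such that: (1) $\mathrm{p.an}(u)=\pi(u)$ for $u\in B^\times$; (2) $\mathrm{p.an}(ux)=\pi(u)\mathrm{p.an}(x)$ for $u\in B^\times,x\in K^\times$; (3) for all $g\in G$, $c\in F^\times$ there is $w\in K$ with $\mathrm{val}(w)=g$, $\mathrm{p.an}(w)=c$; (4) for nonzero $x_1,x_2$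 with $x_1+x_2\ne0$: if $\mathrm{val}(x_1)<\mathrm{val}(x_2)$ then $\mathrm{p.an}(x_1+x_2)=\mathrm{p.an}(x_1)$; if $\mathrm{val}(x_1)=\mathrm{val}(x_2)$ and $\mathrm{p.an}(x_1)+\mathrm{p.an}(x_2)\ne0$ then $\mathrm{val}(x_1+x_2)=\mathrm{val}(x_1)$ and $\mathrm{p.an}(x_1+x_2)=\mathrm{p.an}(x_1)+\mathrm{p.an}(x_2)$; (5) if $x,y\in K^\times$, $\overline{\mathrm{val}(x)}=\overline{\mathrm{val}(y)}$ and $\mathrm{p.an}(x)=\mathrm{p.an}(y)$ then $y=u^2x$ for some $u\in K^\times$; (6) for $a,u\in K^\times$ there is $k\in F^\times$ with $\mathrm{p.an}(au^2)=\mathrm{p.an}(a)k^2$. Such a map exists when strict units are squares; fix one. A subset $S\subseteq\mathrm{val}(A\setminus\{0\})$ is well-behaved if (i) $h\le g$ for all $g\in S$ and $h\in\mathrm{val}(A^\times)$, and (ii) $gh\in S$ for all $g\in S$ and $h\in\mathrm{val}(A\setminus\{0\})$. For well-behaved $S$: $\Gamma_1(S)=\{x\in A\setminus\{0\}:\mathrm{val}(x)\in S\}\cup\{0\}$; if $S$ has a smallest element $g_{\min}$ and $M$ is a quasi-quadratic module of $F$: $\Gamma_2(S,M)=\{x\in A:\ (\mathrm{val}(x)=g_{\min}\text{ and }\mathrm{p.an}(x)\in M)\text{ or }\mathrm{val}(x)>g_{\min}\}$ (containing $0$ since $\mathrm{val}(0)=\infty$). For $g\in G$: $M_g(\mathcal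 M)=\{\mathrm{p.an}(x):x\in\mathcal M\setminus\{0\},\ \mathrm{val}(x)=g\}\cup\{0\}$. *)

From HB Require Import structures.
From mathcomp Require Import all_boot all_order all_algebra.
Set Implicit Arguments. Unset Strict Implicit. Unset Printing Implicit Defensive.
Import Order.TTheory GRing.Theory Num.Theory.
Local Open Scope ring_scope.

Record OAG := {
  oag_car :> Type;
  omul : oag_car -> oag_car -> oag_car;
  oone : oag_car;
  oinv : oag_car -> oag_car;
  ole : oag_car -> oag_car -> Prop;
  omulA : forall a b c, omul a (omul b c) = omul (omul a b) c;
  omulC : forall a b, omul a b = omul b a;
  omul1 : forall a, omul oone a = a;
  omulV : forall a, omul (oinv a) a = oone;
  ole_refl : forall a, ole a a;
  ole_trans : forall a b c, ole a b -> ole b c -> ole a c;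
  ole_anti : forall a b, ole a b -> ole b a -> a = b;
  ole_total : forall a b, ole a b \/ ole b a;
  ole_mul : forall a b c, ole a b -> ole (omul a c) (omul b c)
}.

Section Defs.
Variable G : OAG.

Definition olt (a b : G) : Prop := ole a b /\ a <> b.

(* G ∪ {∞}, with None = ∞ *)
Definition vle (a b : option G) : Prop :=
  match a, b with
  | _, None => True
  | None, Some _ => False
  | Some x, Some y => ole x y
  end.
Definition vlt (a b : option G) : Prop := vle a b /\ a <> b.
Definition vmul (a b : option G) : option G :=
  match a, b with
  | Some x, Some y => Some (omul x y)
  | _, _ => None
  end.

(* same class in G / G^2 *)
Definition sqclass_eq (g h : G) : Prop := exists k : G, g = omul h (omul k k).

Variables (K F : fieldType) (val : K -> option G) (pi : K -> F).

Definition is_valuation : Prop :=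
  [/\ forall x, val x = None <-> x = 0,
      forall x y, val (x * y) = vmul (val x) (val y),
      forall x y g, vle (Some g) (val x) -> vle (Some g) (val y) ->
                    vle (Some g) (val (x + y))
    & forall g : G, exists x, val x = Some g].

Definition valB (x : K) : Prop := vle (Some (oone G)) (val x).
Definition unitB (x : K) : Prop := val x = Some (oone G).

(* pi restricted to B is the residue map B -> F = B / m (surjective ring
   morphism with kernel the maximal ideal m = {val > e}). *)
Definition is_residue_map : Prop :=
  [/\ forall x y, valB x -> valB y -> pi (x + y) = pi x + pi y,
      forall x y, valB x -> valB y -> pi (x * y) = pi x * pi y,
      pi 1 = 1,
      forall c, exists2 x, valB x & pi x = c
    & forall x, valB x -> (pi x = 0 <-> vlt (Some (oone G)) (val x))].

Definition strict_unit (x : K) : Prop := unitB x /\ pi x = 1.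

(* pseudo-angular component map K^x -> F^x (values at 0 irrelevant) *)
Definition is_pan (pan : K -> F) : Prop :=
  (forall x, x != 0 -> pan x != 0) /\
  [/\ forall u, unitB u -> pan u = pi u,
      forall u x, unitB u -> x != 0 -> pan (u * x) = pi u * pan x,
      forall (g : G) (c : F), c != 0 -> exists w, val w = Some g /\ pan w = c,
      (forall x1 x2, x1 != 0 -> x2 != 0 -> x1 + x2 != 0 ->
         (vlt (val x1) (val x2) -> pan (x1 + x2) = pan x1) /\
         (val x1 = val x2 -> pan x1 + pan x2 != 0 ->
            val (x1 + x2) = val x1 /\ pan (x1 + x2) = pan x1 + pan x2)) /\
      (forall x y gx gy, val x = Some gx -> val y = Some gy ->
         sqclass_eq gx gy -> pan x = pan y -> exists2 u, u != 0 & y = u ^+ 2 * x)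
    & forall a u, a != 0 -> u != 0 ->
         exists2 k, k != 0 & pan (a * u ^+ 2) = pan a * k ^+ 2].

Variable A : K -> Prop.

Definition is_subring : Prop :=
  A 1 /\ forall x y, A x -> A y -> A (x - y) /\ A (x * y).

Definition unitA (x : K) : Prop := A x /\ x != 0 /\ A x^-1.

Definition is_qqm (M : K -> Prop) : Prop :=
  [/\ forall x, M x -> A x,
      forall x y, M x -> M y -> M (x + y)
    & forall a x, A a -> M x -> M (a ^+ 2 * x)].

Definition is_qqmF (M : F -> Prop) : Prop :=
  (forall x y, M x -> M y -> M (x + y)) /\ (forall a x, M x -> M (a ^+ 2 * x)).

Definition valset (M : K -> Prop) (g : G) : Prop :=
  exists x, [/\ M x, x != 0 & val x = Some g].

Definition well_behaved (S : G -> Prop) : Prop :=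
  [/\ forall g, S g -> valset A g,
      forall g h, S g -> (exists2 x, unitA x & val x = Some h) -> ole h g
    & forall g h, S g -> valset A h -> S (omul g h)].

Definition is_smallest (S : G -> Prop) (g : G) : Prop :=
  S g /\ forall h, S h -> ole g h.

Definition Gamma1 (S : G -> Prop) (x : K) : Prop :=
  (A x /\ x != 0 /\ exists2 g, val x = Some g & S g) \/ x = 0.

Definition Gamma2 (pan : K -> F) (gmin : G) (N : F -> Prop) (x : K) : Prop :=
  A x /\ ((val x = Some gmin /\ N (pan x)) \/ vlt (Some gmin) (val x)).

Definition Mg (pan : K -> F) (M : K -> Prop) (g : G) (c : F) : Prop :=
  (exists x, [/\ M x, x != 0, val x = Some g & pan x = c]) \/ c = 0.

End Defs.

From HB Require Import structures.
From mathcomp Require Import all_boot all_order all_algebra.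
From Stdlib Require Import Classical.
Import GRing.Theory.
Local Open Scope ring_scope.
Set Implicit Arguments.
Unset Strict Implicit.

(* The whole argument rests on one absorption property of a
   quasi-quadratic module M in residue characteristic two: if val c > e and
   m is in M then c*m is in M.  Indeed 1 + c and -1 are strict units, hence
   squares y^2 and z^2 of elements of B (a subset of A), and
   c*m = y^2*m + z^2*m.  Consequently M contains every z whose value exceeds
   the value of some nonzero element of M ("upward closure").
   From upward closure we derive, in order: S = val(M \ {0}) is stable under
   multiplication by val(A \ {0}); properness of M bounds S from below by the
   values of units of A; hence S is well-behaved.  If S has no least element,
   upward closure gives M = Gamma1(S).  If S has a least element gmin, then
   no element of A can have value < e (else gmin would not be least), so
   A = B, and the square-class axiom (5) of the pseudo-angular component
   identifies the elements of value gmin in M, giving M = Gamma2.  The two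
   alternatives are exclusive because only the second has a least element. *)

Section OrderedGroup.
Variable G : OAG.
Local Notation e := (oone G).
Implicit Types a b c g h k : G.

Lemma omulr1 a : omul a e = a.
Proof. by rewrite omulC omul1. Qed.

Lemma omul_cancel_r a b c : omul a c = omul b c -> a = b.
Proof.
move=> /(f_equal (fun t => omul t (oinv c))).
by rewrite -!omulA (omulC c (oinv c)) omulV !omulr1.
Qed.

Lemma omul_oinvK h k : omul h (omul k (oinv h)) = k.
Proof. by rewrite omulA (omulC h k) -omulA (omulC h (oinv h)) omulV omulr1. Qed.

Lemma osq_eq1 g : omul g g = e -> g = e.
Proof.
move=> gg; case: (ole_total g e) => le; have := ole_mul g le;
  rewrite gg omul1 => le'; [exact: ole_anti le le' | exact: ole_anti le' le].
Qed.

Lemma olt_mul2r a b c : olt a b -> olt (omul a c) (omul b c).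
Proof. by case=> ab nab; split; [exact: ole_mul | move/omul_cancel_r]. Qed.

Lemma olt_of_not_le a b : ~ ole a b -> olt b a.
Proof.
move=> nab; case: (ole_total a b) => // ba; split=> // ba_eq.
by apply: nab; rewrite ba_eq; apply: ole_refl.
Qed.

Lemma olt_le_false a b : olt a b -> ole b a -> False.
Proof. by case=> ab nab ba; apply: nab; apply: ole_anti. Qed.

Lemma vlt_Some a b : vlt (Some a) (Some b) <-> olt a b.
Proof.
split; case=> ab nab; split=> //; first by move=> ab_eq; apply: nab; rewrite ab_eq.
by case.
Qed.

End OrderedGroup.

Section Valuation.
Variables (G : OAG) (K : fieldType) (val : K -> option G).
Hypothesis Hv : is_valuation val.
Local Notation e := (oone G).

Lemma val_eqNone x : val x = None <-> x = 0.
Proof. by case: Hv. Qed.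

Lemma val0 : val 0 = None.
Proof. exact/val_eqNone. Qed.

Lemma val_neq0 x : x != 0 -> exists g, val x = Some g.
Proof.
case E: (val x) => [g|] nx; first by exists g.
by move/val_eqNone: E nx => ->; rewrite eqxx.
Qed.

Lemma valMS x y gx gy :
  val x = Some gx -> val y = Some gy -> val (x * y) = Some (omul gx gy).
Proof. by case: Hv => _ -> _ _ -> ->. Qed.

Lemma val1 : val 1 = Some e.
Proof.
have [g vg] := val_neq0 (oner_neq0 K).
have := valMS vg vg; rewrite mulr1 vg => -[gg].
by congr Some; apply: (@omul_cancel_r _ _ _ g); rewrite omul1.
Qed.

Lemma valV x g : x != 0 -> val x = Some g -> val x^-1 = Some (oinv g).
Proof.
move=> x0 vx; have [h vh] := val_neq0 (invr_neq0 x0).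
have := valMS vx vh; rewrite mulfV // val1 vh => -[gh].
by congr Some; apply: (@omul_cancel_r _ _ _ g); rewrite omulV omulC.
Qed.

Lemma val_sq_unit y : val (y * y) = Some e -> val y = Some e.
Proof.
case E: (val y) => [g|]; last by move/val_eqNone: E => ->; rewrite mul0r val0.
by rewrite (valMS E E) => -[/osq_eq1 ->].
Qed.

(* -1 has value e, being a square root of 1. *)
Lemma valN1 : val (-1) = Some e.
Proof. by apply: val_sq_unit; rewrite mulrNN mulr1 val1. Qed.

End Valuation.

Section Residue.
Variables (G : OAG) (K F : fieldType) (val : K -> option G) (pi : K -> F).
Hypotheses (Hv : is_valuation val) (Hpi : is_residue_map val pi).
Local Notation e := (oone G).

Lemma valB_unit x : val x = Some e -> valB val x.
Proof. by rewrite /valB => ->; apply: ole_refl. Qed.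

Lemma pi0 : pi 0 = 0.
Proof.
have B0 : valB val 0 by rewrite /valB (val0 Hv).
case: Hpi => piD _ _ _ _; have := piD 0 0 B0 B0.
by rewrite addr0 -{1}[pi 0]addr0 => /addrI /esym.
Qed.

Lemma unitB_of_residue x : valB val x -> pi x != 0 -> unitB val x.
Proof.
move=> Bx px0; rewrite /unitB; move: Bx; rewrite /valB.
case E: (val x) => [g|] /= leg; last first.
  by move/(val_eqNone Hv): E px0 => ->; rewrite pi0 eqxx.
case: (classic (e = g)) => [-> // | neg]; case/negP: px0; apply/eqP.
case: Hpi => _ _ _ _ /(_ x); rewrite /valB E => /(_ leg) [_ -> //].
exact/vlt_Some.
Qed.

Lemma strict_unit_1plus c : vlt (Some e) (val c) -> strict_unit val pi (1 + c).
Proof.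
case=> Bc nc; case: Hpi => piD _ pi1 _ piker.
have pic : pi c = 0 by apply/(piker c Bc).
have B1 : valB val 1 := valB_unit (val1 Hv).
have pi1c : pi (1 + c) = 1 by rewrite piD // pi1 pic addr0.
have B1c : valB val (1 + c).
  by case: Hv => _ _ vD _; apply: vD => //; rewrite val1.
by split=> //; apply: unitB_of_residue => //; rewrite pi1c oner_neq0.
Qed.

Hypothesis H2 : 2 \in [pchar F].

Lemma strict_unitN1 : strict_unit val pi (-1).
Proof.
split; first exact: valN1.
case: Hpi => piD _ pi1 _ _.
have := piD 1 (-1) (valB_unit (val1 Hv)) (valB_unit (valN1 Hv)).
rewrite subrr pi0 pi1 => /(congr1 (+%R 1)).
by rewrite addKr_pchar2 // addr0.
Qed.

End Residue.

Section QuasiQuadraticModule.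
Variables (G : OAG) (K F : fieldType) (val : K -> option G) (pi : K -> F)
  (A M : K -> Prop).
Hypotheses (Hv : is_valuation val) (Hpi : is_residue_map val pi)
  (H2 : 2 \in [pchar F])
  (Hsq : forall x, strict_unit val pi x -> exists y : K, x = y * y)
  (HA : is_subring A) (HBA : forall x, valB val x -> A x) (HM : is_qqm A M).
Local Notation e := (oone G).
Local Notation S := (valset val M).

Lemma subring0 : A 0.
Proof. by case: HA => A1 /(_ 1 1 A1 A1) [+ _]; rewrite subrr. Qed.

Lemma qqm0 m : M m -> M 0.
Proof. by case: HM => _ _ /(_ 0 m subring0) Msq /Msq; rewrite expr0n mul0r. Qed.

(* Strict units have square roots inside B, hence inside A. *)
Lemma strict_unit_sqrt t : strict_unit val pi t -> exists2 y, A y & t = y ^+ 2.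
Proof.
move=> t_su; have [y ty] := Hsq t_su; exists y; last by rewrite expr2.
by apply/HBA/valB_unit/(val_sq_unit Hv); rewrite -ty; case: t_su.
Qed.

Lemma qqm_absorbs c m : vlt (Some e) (val c) -> M m -> M (c * m).
Proof.
move=> c_max Mm; case: HM => _ MD Msq.
have [y Ay y2] := strict_unit_sqrt (strict_unit_1plus Hv Hpi c_max).
have [z Az z2] := strict_unit_sqrt (strict_unitN1 Hv Hpi H2).
have := MD _ _ (Msq _ _ Ay Mm) (Msq _ _ Az Mm).
by rewrite -y2 -z2 mulrDl mul1r mulN1r addrAC subrr add0r.
Qed.

Lemma qqm_upward m z g :
  M m -> m != 0 -> val m = Some g -> vlt (Some g) (val z) -> M z.
Proof.
move=> Mm m0 vm; case: (eqVneq z 0) => [-> _ | z0]; first exact: qqm0 Mm.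
have [k vz] := val_neq0 Hv z0; rewrite vz => /vlt_Some gk.
rewrite -(divfK m0 z); apply: qqm_absorbs => //.
rewrite (valMS Hv vz (valV Hv m0 vm)); apply/vlt_Some.
by have := olt_mul2r (oinv g) gk; rewrite (omulC g) omulV.
Qed.

Lemma valset_mul g h : S g -> valset val A h -> S (omul g h).
Proof.
move=> [m [Mm m0 vm]] [a [Aa a0 va]]; case: HM => _ _ Msq.
have am0 : a * m != 0 by rewrite mulf_neq0.
have vam : val (a * m) = Some (omul g h) by rewrite (valMS Hv va vm) omulC.
case: (classic (e = h)) => [<- | neh]; first by rewrite omulr1; exists m.
exists (a * m); split=> //; case: (ole_total e h) => leh.
- apply: (qqm_upward Mm m0 vm); rewrite vam; apply/vlt_Some.
  by have := olt_mul2r g (conj leh neh); rewrite omul1 omulC.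
- have a2m0 : a ^+ 2 * m != 0 by rewrite mulf_neq0 // expf_neq0.
  have va2m : val (a ^+ 2 * m) = Some (omul h (omul g h)).
    by rewrite expr2 -mulrA (valMS Hv va vam).
  apply: (qqm_upward (Msq _ _ Aa Mm) a2m0 va2m); rewrite vam; apply/vlt_Some.
  by have := olt_mul2r (omul g h) (conj leh (nesym neh)); rewrite omul1.
Qed.

Hypothesis Hproper : exists x, A x /\ ~ M x.

(* Condition (i): a proper M has all its values above those of units of A,
   since otherwise upward closure would put all of A into M. *)
Lemma valset_unit_bound g h :
  S g -> (exists2 x, unitA A x & val x = Some h) -> ole h g.
Proof.
move=> Sg [x [Ax [x0 Axi]] vx]; apply: NNPP => /olt_of_not_le gh.
case: Hproper => y [Ay]; apply.
case: (eqVneq y 0) => [-> | y0]; first by case: Sg => m [/qqm0].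
have [k vy] := val_neq0 Hv y0.
have vyx := valMS Hv vy (valV Hv x0 vx).
have Ayx : A (y * x^-1) by case: HA => _ /(_ _ _ Ay Axi) [].
have yx0 : y * x^-1 != 0 by rewrite mulf_neq0 // invr_neq0.
have [m [Mm m0 vm]] := valset_mul Sg (ex_intro _ _ (And3 Ayx yx0 vyx)).
apply: (qqm_upward Mm m0 vm); rewrite vy; apply/vlt_Some.
by have := olt_mul2r (omul k (oinv h)) gh; rewrite omul_oinvK.
Qed.

Lemma well_behaved_valset : well_behaved val A S.
Proof.
split; [| exact: valset_unit_bound | exact: valset_mul].
by move=> g [x [Mx x0 vx]]; exists x; split=> //; case: HM => /(_ x Mx).
Qed.

Hypothesis Hnonzero : exists x, M x /\ x != 0.

Lemma qqm_Gamma1 : ~ (exists g, is_smallest S g) -> forall x, M x <-> Gamma1 val A S x.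
Proof.
move=> nmin x; split=> [Mx | [[Ax [x0 [g vx Sg]]] | ->]].
- case: (eqVneq x 0) => [-> | x0]; [by right | left].
  have [g vx] := val_neq0 Hv x0.
  by split; [case: HM => /(_ x Mx) | split=> //; exists g => //; exists x].
- apply: NNPP => nMx; apply: nmin; exists g; split=> // h [m [Mm m0 vm]].
  apply: NNPP => /olt_of_not_le hg; apply: nMx.
  by apply: (qqm_upward Mm m0 vm); rewrite vx; apply/vlt_Some.
- by case: Hnonzero => m [/qqm0].
Qed.

Variable gmin : G.
Hypothesis Hgmin : is_smallest S gmin.

(* A least value forces A = B: an element of A of value < e would
   produce a smaller value in S. *)
Lemma subring_eq_valring x : A x <-> valB val x.
Proof.
split=> [Ax | /HBA //]; rewrite /valB.
case: (eqVneq x 0) => [-> | x0]; first by rewrite (val0 Hv).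
have [h vx] := val_neq0 Hv x0; rewrite vx /=; apply: NNPP => /olt_of_not_le he.
case: Hgmin => Sg /(_ _ (valset_mul Sg (ex_intro _ x (And3 Ax x0 vx)))).
by apply: olt_le_false; have := olt_mul2r gmin he; rewrite omul1 omulC.
Qed.

Variable pan : K -> F.
Hypothesis Hpan : is_pan val pi pan.

(* Elements of value gmin with the angular component of an element of M
   differ from it by a unit square, hence lie in M. *)
Lemma qqm_gmin_component x m :
  M m -> m != 0 -> val m = Some gmin -> val x = Some gmin -> pan m = pan x -> M x.
Proof.
move=> Mm m0 vm vx pmx; case: Hpan => _ [_ _ _ [_ pan_sq] _].
have sq : sqclass_eq gmin gmin by exists e; rewrite omul1 omulr1.
have [u u0 xu] := pan_sq m x gmin gmin vm vx sq pmx.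
have [k vu] := val_neq0 Hv u0.
have vu2 : val (u * u) = Some e.
  rewrite (valMS Hv vu vu); congr Some.
  move: vx; rewrite xu expr2 (valMS Hv (valMS Hv vu vu) vm) => -[].
  by rewrite -{2}[gmin]omul1 => /omul_cancel_r.
have Au : A u by apply/HBA/valB_unit/(val_sq_unit Hv).
by rewrite xu; case: HM => _ _ /(_ u m Au Mm).
Qed.

Lemma qqm_Gamma2 x : M x <-> Gamma2 val A pan gmin (Mg val pan M gmin) x.
Proof.
case: Hgmin => [[m [Mm m0 vm]] gmin_least]; split=> [Mx | [Ax [[vx Npx] | gx]]].
- split; first by case: HM => /(_ x Mx).
  case: (eqVneq x 0) => [-> | x0]; first by rewrite (val0 Hv); right.
  have [g vx] := val_neq0 Hv x0; rewrite vx.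
  case: (classic (gmin = g)) => [eq_g | neg].
    by subst g; left; split=> //; left; exists x; split.
  by right; apply/vlt_Some; split=> //; apply: gmin_least; exists x.
- have x0 : x != 0 by apply: contraPneq vx => ->; rewrite (val0 Hv).
  case: Npx => [[m' [Mm' m'0 vm' pmx]] | px0].
  + exact: qqm_gmin_component Mm' m'0 vm' vx pmx.
  + by case: Hpan => /(_ x x0); rewrite px0 eqxx.
- exact: qqm_upward Mm m0 vm gx.
Qed.

End QuasiQuadraticModule.

Theorem mainTheorem19 (G : OAG) (K F : fieldType) (val : K -> option G)
  (pi : K -> F) (pan : K -> F) (A M : K -> Prop) :
  is_valuation val ->
  is_residue_map val pi ->
  (2 \in [pchar F]) ->
  (forall x, strict_unit val pi x -> exists y : K, x = y * y) ->
  is_pan val pi pan ->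
  is_subring A ->
  (forall x, valB val x -> A x) ->
  is_qqm A M ->
  (exists x, M x /\ x != 0) ->
  (exists x, A x /\ ~ M x) ->
  let S := valset val M in
  well_behaved val A S /\
  (let P1 := (~ exists g, is_smallest S g) /\ (forall x, M x <-> Gamma1 val A S x) in
   let P2 := (forall x, A x <-> valB val x) /\
             exists gmin, is_smallest S gmin /\
               (forall x, M x <-> Gamma2 val A pan gmin (Mg val pan M gmin) x) in
   (P1 \/ P2) /\ ~ (P1 /\ P2)).
Proof.
move=> Hv Hpi H2 Hsq Hpan HA HBA HM Hnonzero Hproper /=.
split; first exact: well_behaved_valset Hv Hpi H2 Hsq HA HBA HM Hproper.
split; last by case=> [[nmin _] [_ [g [Sg _]]]]; apply: nmin; exists g.
case: (classic (exists g, is_smallest (valset val M) g)) => [[gmin Hgmin] | nmin].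
- right; split; first exact (subring_eq_valring Hv Hpi H2 Hsq HA HBA HM Hgmin).
  by exists gmin; split=> //; exact (qqm_Gamma2 Hv Hpi H2 Hsq HA HBA HM Hgmin Hpan).
- left; split=> //; exact (qqm_Gamma1 Hv Hpi H2 Hsq HA HBA HM Hnonzero nmin).
Qed.
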